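(* For every list (any length and initial order) and every request sequence $\sigma$, in the full cost model, $$\mathrm{MTFO}(\sigma)+\mathrm{MTFE}(\sigma)\le 4\cdot\mathrm{OPT}(\sigma).$$
   Context: Static list update: a list of distinct items in some initial order; serving a request to the item at position $i$ (from the front) costs $i$ (full cost model); the accessed item may be moved closer to the front for free (free exchange); two adjacent items may be swapped at cost $1$ (paid exchange). $A(\sigma)$ is the total cost of algorithm $A$ and $\mathrm{OPT}(\sigma)$ the minimum cost of any offline algorithm from the same initial list. MTFO moves a requested item to the front on the 1st, 3rd, 5th, ... request to that item; MTFE on the 2nd, 4th, 6th, ... request; otherwise they leave it in place, and they make no paid exchanges. *)

From mathcomp Require Import all_boot.
From Stdlib Require Import ClassicalEpsilon.
Set Implicit Arguments. Unset Strict Implicit. Unset Printing Implicit Defensive.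

Section ListUpdate.
Variable T : eqType.

(* Cost of accessing x in list L (x assumed in L): its 1-based position. *)
Definition access_cost (x : T) (L : seq T) : nat := (index x L).+1.

(* Paid exchange: swap the items at (0-based) positions i and i+1
   (no-op if position i+1 does not exist; it is still charged 1). *)
Fixpoint swap_adj (i : nat) (L : seq T) : seq T :=
  match i, L with
  | 0, a :: b :: r => b :: a :: r
  | i'.+1, a :: r => a :: swap_adj i' r
  | _, _ => L
  end.

(* Free exchange: move x to (0-based) position j (only used with j <= index x L). *)
Definition move_to (j : nat) (x : T) (L : seq T) : seq T :=
  let L' := rem x L in take j L' ++ x :: drop j L'.

(* One step of an arbitrary offline algorithm: a list of paid adjacent
   swaps performed before serving the request, then the requested item is
   moved (for free) to position min(j, its current position). *)
Definition step := (seq nat * nat)%type.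
Definition step0 : step := ([::], 0).

Fixpoint offline_cost (A : seq step) (L : seq T) (s : seq T) : nat :=
  match s with
  | [::] => 0
  | x :: s' =>
      let: (sw, j) := head step0 A in
      let L1 := foldl (fun M i => swap_adj i M) L sw in
      let L2 := move_to (minn j (index x L1)) x L1 in
      size sw + access_cost x L1 + offline_cost (behead A) L2 s'
  end.

Lemma offline_cost_exists (L s : seq T) : exists n, exists A, offline_cost A L s = n.
Proof. by exists (offline_cost [::] L s), [::]. Qed.

Definition has_offline_cost (L s : seq T) : pred nat :=
  fun n => if excluded_middle_informative (exists A, offline_cost A L s = n)
           then true else false.

Lemma has_offline_cost_exists (L s : seq T) : exists n, has_offline_cost L s n.
Proof.
have [n Hn] := offline_cost_exists L s; exists n; rewrite /has_offline_cost.
by case: excluded_middle_informative.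
Qed.

Definition OPT (L s : seq T) : nat := ex_minn (has_offline_cost_exists L s).

(* Move-to-front on the k-th request to an item iff (k odd) == b? :
   [seen] are the previous requests; the current request to x is number
   (count_mem x seen).+1.  It moves x to the front iff odd (count_mem x seen) == b. *)
Fixpoint mtf_parity_cost (b : bool) (L seen s : seq T) : nat :=
  match s with
  | [::] => 0
  | x :: s' =>
      let L' := if odd (count_mem x seen) == b then x :: rem x L else L in
      access_cost x L + mtf_parity_cost b L' (x :: seen) s'
  end.

(* MTFO: moves to front on the 1st, 3rd, 5th, ... request to an item. *)
Definition MTFO (L s : seq T) : nat := mtf_parity_cost false L [::] s.
(* MTFE: moves to front on the 2nd, 4th, 6th, ... request to an item. *)
Definition MTFE (L s : seq T) : nat := mtf_parity_cost true L [::] s.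

End ListUpdate.

(* The proof is a potential-function argument on pairs of items.  The state
   of an ordered pair (a, b) records whether a precedes b in the lists of
   OPT, MTFO and MTFE, and the parities of the numbers of requests to a and
   b so far; [pair_potential] assigns it a potential between 0 and 4.
   Accessing x costs 1 plus the number of items in front of x, so summing
   the per-pair access costs over all ordered pairs gives twice the access
   cost minus 2 ([pair_cost_sum]).  Three local facts then suffice:
   - a paid exchange of OPT changes the state of only one unordered pair,
     hence raises the total potential by at most 8 ([potential_swap]);
   - on a request, the amortized cost inequality holds pair by pair
     ([pair_request], a finite check [pair_potential_request] once the
     effect of the three list updates on relative orders is known);
   - the potential vanishes when all three lists coincide.
   Summing over the request sequence yields
   2 (MTFO + MTFE) <= 8 OPT + initial potential = 8 OPT ([mtf_amortized]). *)

From mathcomp Require Import all_boot zify.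
From Stdlib Require Import ClassicalEpsilon.
Set Implicit Arguments. Unset Strict Implicit. Unset Printing Implicit Defensive.

Section ListOperations.
Variable T : eqType.
Implicit Types (x y z a b : T) (M : seq T).

Lemma index_neq x y M : x \in M -> y != x -> index y M != index x M.
Proof.
move=> xM yx; apply/eqP => e.
have [yM|yM] := boolP (y \in M); first by move: yx; rewrite (index_inj x yM xM e) eqxx.
by move: xM; rewrite -index_mem -e memNindex // ltnn.
Qed.

Lemma index_rem x y M : x \in M -> y != x ->
  index y (rem x M) = if index y M < index x M then index y M else (index y M).-1.
Proof.
elim: M => [//|z M IH] /=; rewrite inE => xM yx.
have [->|zx] := eqVneq z x; first by rewrite eq_sym (negPf yx).
rewrite /=; have [//|zy] := eqVneq z y.
move: xM; rewrite eq_sym (negPf zx) /= => xM.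
have := index_neq xM yx; rewrite IH //; case: ifP; case: ifP => //; lia.
Qed.

Lemma move_to0 x M : move_to 0 x M = x :: rem x M.
Proof. by rewrite /move_to take0 drop0. Qed.

Lemma index_move_to k x y M : x \in M -> y \in M -> y != x ->
  index y (move_to k x M) =
    let r := index y (rem x M) in if r < k then r else r.+1.
Proof.
move=> xM yM yx /=; rewrite /move_to index_cat.
have yR : y \in rem x M by rewrite (perm_mem (perm_to_rem xM)) inE (negPf yx) in yM.
rewrite in_take //; case: ifP => lt.
  by rewrite -{2}(cat_take_drop k (rem x M)) index_cat in_take // lt.
have hs : size (take k (rem x M)) = k.
  by rewrite size_take; move: yR; rewrite -index_mem; case: ifP => //; lia.
rewrite /= eq_sym (negPf yx) hs -[in RHS](cat_take_drop k (rem x M)) index_cat.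
by rewrite in_take // lt hs; lia.
Qed.

Lemma index_move_to_self k x M : uniq M -> x \in M -> k <= index x M ->
  index x (move_to k x M) = k.
Proof.
move=> uM xM kx; rewrite /move_to index_cat.
have -> : (x \in take k (rem x M)) = false.
  by apply/negP => /mem_take; rewrite mem_rem_uniqF.
rewrite /= eqxx addn0 size_take size_rem //.
by move: xM; rewrite -index_mem; case: ifP => //; lia.
Qed.

Lemma index_swap_adj i M y : uniq M ->
  index y (swap_adj i M) = if i.+1 < size M then
    (if index y M == i then i.+1 else if index y M == i.+1 then i else index y M)
    else index y M.
Proof.
elim: M i => [|a r IH] [|i] //=.
- case: r IH => [|b r'] IH //= /and3P [] ; rewrite inE negb_or => /andP[ab ar] br ur.
  case: (eqVneq a y) => [<-|ay]; first by rewrite eq_sym (negPf ab).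
  by case: (eqVneq b y).
- move=> /andP [ar ur]; rewrite IH //.
  case: (eqVneq a y) => [_|ay] /=; first by case: ifP.
  by rewrite ltnS !eqSS; case: ifP => //; case: ifP => //; case: ifP.
Qed.

Lemma perm_swap_adj i M : perm_eq (swap_adj i M) M.
Proof.
elim: M i => [|a r IH] [|i] //=; last by rewrite perm_cons.
by case: r IH => [|b r'] IH //=; apply/permP => p /=; rewrite addnCA.
Qed.

Lemma perm_swaps (sw : seq nat) M : perm_eq (foldl (fun M i => swap_adj i M) M sw) M.
Proof.
elim: sw M => [|i sw IH] M /=; first exact: perm_refl.
exact: perm_trans (IH _) (perm_swap_adj _ _).
Qed.

Lemma perm_move_to k x M : x \in M -> perm_eq (move_to k x M) M.
Proof.
move=> xM; rewrite perm_sym; apply: perm_trans (perm_to_rem xM) _; rewrite perm_sym.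
rewrite /move_to -[in X in perm_eq _ X](cat_take_drop k (rem x M)).
by apply/permP => p; rewrite /= !count_cat /= addnCA.
Qed.

Definition before M a b : bool := index a M < index b M.

Lemma before_anti M a b : b \in M -> a != b -> before M a b = ~~ before M b a.
Proof.
by move=> bM ab; have /eqP := index_neq bM ab; rewrite /before => ?; apply/idP/idP; lia.
Qed.

Lemma before_move_to_other k x y z M : x \in M -> y \in M -> z \in M ->
  y != x -> z != x -> k <= index x M ->
  before (move_to k x M) y z = before M y z.
Proof.
move=> xM yM zM yx zx kx; rewrite /before !index_move_to //= !index_rem //.
have /eqP := index_neq xM yx; have /eqP := index_neq xM zx.
case: (ltnP (index y M)); case: (ltnP (index z M)) => ? ? ? ?;
  by do 2 case: ifP => ?; apply/idP/idP; lia.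
Qed.

Lemma before_move_to_self k x b M : uniq M -> x \in M -> b \in M ->
  b != x -> k <= index x M -> before M x b -> before (move_to k x M) x b.
Proof.
move=> uM xM bM bx kx; have /eqP := index_neq xM bx.
rewrite /before index_move_to_self // index_move_to //= !index_rem //.
by case: (ltnP (index b M)) => ? ?; case: ifP => ?; lia.
Qed.

Definition mtf_if (c : bool) x M : seq T := if c then x :: rem x M else M.

Lemma before_mtf_if_self c x b M : b != x ->
  before (mtf_if c x M) x b = c || before M x b.
Proof. by case: c => //= bx; rewrite /before /= eqxx eq_sym (negPf bx). Qed.

Lemma before_mtf_if_other c x y z M : x \in M -> y \in M -> z \in M ->
  y != x -> z != x -> before (mtf_if c x M) y z = before M y z.
Proof. by case: c => //= *; rewrite -move_to0 before_move_to_other. Qed.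

Lemma perm_mtf_if c x M : x \in M -> perm_eq (mtf_if c x M) M.
Proof. by case: c => //= xM; rewrite -move_to0 perm_move_to. Qed.

Definition swapped M i a b : bool :=
  ((index a M == i) && (index b M == i.+1)) ||
  ((index a M == i.+1) && (index b M == i)).

Lemma before_swap_adj i M a b : uniq M -> ~~ swapped M i a b ->
  before (swap_adj i M) a b = before M a b.
Proof.
move=> uM; rewrite /swapped /before !index_swap_adj //.
by case: ifP => // _; do 4 case: eqP => ?; move=> //= _; apply/idP/idP; lia.
Qed.

Lemma count_index_lt k M : uniq M ->
  count (fun a => index a M < k) M = minn k (size M).
Proof.
elim: M k => [|z M IH] k /=; first by rewrite minn0.
move=> /andP [zM uM]; rewrite eqxx.
rewrite (@eq_in_count _ _ (fun a => index a M < k.-1)); last first.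
  by move=> a aM /=; rewrite eq_sym (negPf (memPn zM a aM)); case: k.
by rewrite IH //; case: k => [|k] /=; rewrite ?min0n // minnSS; lia.
Qed.

Lemma count_before x M : uniq M -> x \in M -> count (before M ^~ x) M = index x M.
Proof. by move=> uM xM; rewrite count_index_lt //; apply/minn_idPl/ltnW; rewrite index_mem. Qed.

End ListOperations.

(* The potential of a pair of items {a, b}.  [o], [m], [e] tell whether a
   precedes b in the lists of OPT, MTFO and MTFE; [pa], [pb] are the parities
   of the numbers of requests to a and b so far.
   When exactly one MTF variant disagrees with OPT it carries 1 if the next
   request to the item behind makes that variant move it to the front, and
   2 if this needs two more requests. *)
Definition pair_potential (o m e pa pb : bool) : nat :=
  match o, m, e with
  | false, false, false | true, true, true => 0
  | false, true, true | true, false, false => 4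
  | false, false, true => if pb then 1 else 2
  | false, true, false => if pb then 2 else 1
  | true, false, true => if pa then 2 else 1
  | true, true, false => if pa then 1 else 2
  end.

Lemma pair_potential_agree (c pa pb : bool) : pair_potential c c c pa pb = 0.
Proof. by case: c pa pb => [] [] []. Qed.

Lemma pair_potential_sym (o m e pa pb : bool) :
  pair_potential (~~ o) (~~ m) (~~ e) pb pa = pair_potential o m e pa pb.
Proof. by case: o m e pa pb => [] [] [] [] []. Qed.

Lemma pair_potential_flip (o o' m e pa pb : bool) :
  pair_potential o' m e pa pb <= pair_potential o m e pa pb + 4.
Proof. by case: o o' m e pa pb => [] [] [] [] [] []. Qed.

(* OPT's move can only bring a in
   front of b ([o ==> o']); MTFO moves a to the front iff [pa] is even, MTFE
   iff [pa] is odd.  The extra access costs of MTFO and MTFE caused by b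
   plus the new potential are bounded by 4 times OPT's extra access cost
   plus the old potential. *)
Lemma pair_potential_request (o o' m e pa pb : bool) : o ==> o' ->
  ~~ m + ~~ e + pair_potential o' (~~ pa || m) (pa || e) (~~ pa) pb
  <= 4 * ~~ o + pair_potential o m e pa pb.
Proof. by case: o o' m e pa pb => [] [] [] [] [] []. Qed.

Section Potential.
Variable T : eqType.
Implicit Types (x y a b : T) (M Lp Lo Le seen : seq T).

Definition parity seen y : bool := odd (count_mem y seen).

Lemma parity_cons x y seen :
  parity (x :: seen) y = if y == x then ~~ parity seen y else parity seen y.
Proof. by rewrite /parity /= eq_sym; case: (y == x). Qed.

Definition pair_state Lp Lo Le seen a b : nat :=
  pair_potential (before Lp a b) (before Lo a b) (before Le a b)
    (parity seen a) (parity seen b).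

Definition pair_cost x M a b : nat :=
  ((a == x) && before M b a) + ((b == x) && before M a b).

Lemma pair_state_diag Lp Lo Le seen a : pair_state Lp Lo Le seen a a = 0.
Proof. by rewrite /pair_state /before !ltnn pair_potential_agree. Qed.

Lemma pair_state_sym Lp Lo Le seen a b : a \in Lp -> a \in Lo -> a \in Le ->
  a != b -> pair_state Lp Lo Le seen b a = pair_state Lp Lo Le seen a b.
Proof.
move=> ap ao ae ab; rewrite eq_sym in ab.
by rewrite /pair_state (before_anti ap ab) (before_anti ao ab) (before_anti ae ab)
  pair_potential_sym.
Qed.

Variable L : seq T.
Hypothesis uniq_L : uniq L.

Lemma pair_request_self k x b M Lo Le seen :
  perm_eq M L -> perm_eq Lo L -> perm_eq Le L -> x \in L -> b \in L ->
  b != x -> k <= index x M ->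
  pair_cost x Lo x b + pair_cost x Le x b +
  pair_state (move_to k x M) (mtf_if (~~ parity seen x) x Lo)
    (mtf_if (parity seen x) x Le) (x :: seen) x b
  <= 4 * pair_cost x M x b + pair_state M Lo Le seen x b.
Proof.
move=> pM pLo pLe xL bL bx kx.
have xo : x \in Lo by rewrite (perm_mem pLo).
have xe : x \in Le by rewrite (perm_mem pLe).
have xM : x \in M by rewrite (perm_mem pM).
rewrite /pair_cost /pair_state eqxx (negPf bx) !addn0 /=.
rewrite (before_anti xo bx) (before_anti xe bx) (before_anti xM bx).
rewrite !before_mtf_if_self // !parity_cons eqxx (negPf bx).
apply: pair_potential_request; apply/implyP.
by apply: before_move_to_self; rewrite ?(perm_mem pM) ?(perm_uniq pM).
Qed.

Lemma pair_cost_sym x M a b : pair_cost x M b a = pair_cost x M a b.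
Proof. exact: addnC. Qed.

Lemma pair_request k x a b M Lo Le seen :
  perm_eq M L -> perm_eq Lo L -> perm_eq Le L ->
  x \in L -> a \in L -> b \in L -> k <= index x M ->
  pair_cost x Lo a b + pair_cost x Le a b +
  pair_state (move_to k x M) (mtf_if (~~ parity seen x) x Lo)
    (mtf_if (parity seen x) x Le) (x :: seen) a b
  <= 4 * pair_cost x M a b + pair_state M Lo Le seen a b.
Proof.
move=> pM pLo pLe xL aL bL kx.
have [<-|ab] := eqVneq a b.
  by rewrite !pair_state_diag /pair_cost /before !ltnn !andbF.
have [ax|ax] := eqVneq a x; first by rewrite ax; apply: pair_request_self; rewrite // -ax eq_sym.
have [xM aM bM] : [/\ x \in M, a \in M & b \in M] by rewrite !(perm_mem pM).
have [xo ao bo] : [/\ x \in Lo, a \in Lo & b \in Lo] by rewrite !(perm_mem pLo).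
have [xe ae be] : [/\ x \in Le, a \in Le & b \in Le] by rewrite !(perm_mem pLe).
have [bx|bx] := eqVneq b x.
  (* the pair (a, x) is the pair (x, a) seen from the other side *)
  rewrite bx in ab *; rewrite !(pair_cost_sym x _ x a).
  have xa : x != a by rewrite eq_sym.
  rewrite (pair_state_sym _ xM xo xe xa) (pair_state_sym _ _ _ _ xa); last 3 first.
  - by rewrite (perm_mem (perm_move_to k xM)).
  - by rewrite (perm_mem (perm_mtf_if _ xo)).
  - by rewrite (perm_mem (perm_mtf_if _ xe)).
  exact: pair_request_self.
rewrite /pair_cost (negPf ax) (negPf bx) /pair_state !parity_cons (negPf ax) (negPf bx).
by rewrite !before_mtf_if_other ?before_move_to_other.
Qed.

Definition potential Lp Lo Le seen : nat :=
  \sum_(a <- L) \sum_(b <- L) pair_state Lp Lo Le seen a b.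

Lemma sum_bool_count (P : pred T) (s : seq T) : \sum_(a <- s) P a = count P s.
Proof. by rewrite -sum1_count [RHS]big_mkcond. Qed.

Lemma sum_select x (P : pred T) : x \in L -> \sum_(a <- L) ((a == x) && P a) = P x.
Proof. by move=> xL; rewrite (bigD1_seq x) //= eqxx big1 ?addn0 // => a /negPf ->. Qed.

(* The pair costs add up to twice the access cost (up to the constant 1):
   every item in front of x is counted once in (a, x) and once in (x, a). *)
Lemma pair_cost_sum x M : perm_eq M L -> x \in L ->
  \sum_(a <- L) \sum_(b <- L) pair_cost x M a b = 2 * index x M.
Proof.
move=> pM xL.
have in_front : \sum_(b <- L) before M b x = index x M.
  by rewrite sum_bool_count -(permP pM) count_before ?(perm_uniq pM) ?(perm_mem pM).
rewrite /pair_cost; under eq_bigr do rewrite big_split /=.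
rewrite big_split /= exchange_big /=.
under eq_bigr do rewrite sum_select //.
by rewrite in_front addnn mul2n.
Qed.

(* Amortized cost of a request: twice the access costs of MTFO and MTFE plus
   the new potential is at most 8 times OPT's access cost plus the old
   potential (the terms for the constant 1 in the access costs are left out). *)
Lemma potential_request k x M Lo Le seen :
  perm_eq M L -> perm_eq Lo L -> perm_eq Le L -> x \in L -> k <= index x M ->
  2 * index x Lo + 2 * index x Le +
  potential (move_to k x M) (mtf_if (~~ parity seen x) x Lo)
    (mtf_if (parity seen x) x Le) (x :: seen)
  <= 8 * index x M + potential M Lo Le seen.
Proof.
move=> pM pLo pLe xL kx.
rewrite -(pair_cost_sum pLo xL) -(pair_cost_sum pLe xL) -[8]/(4 * 2) -mulnA -(pair_cost_sum pM xL).
rewrite /potential big_distrr -!big_split /= big_seq [leqRHS]big_seq.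
apply: leq_sum => a aL; rewrite big_distrr -!big_split /= big_seq [leqRHS]big_seq.
by apply: leq_sum => b bL; apply: pair_request.
Qed.

Lemma pair_state_swap i M Lo Le seen a b : uniq M ->
  pair_state (swap_adj i M) Lo Le seen a b
  <= pair_state M Lo Le seen a b + 4 * swapped M i a b.
Proof.
move=> uM; rewrite /pair_state; have [sw|nsw] := boolP (swapped M i a b).
  by rewrite muln1 pair_potential_flip.
by rewrite before_swap_adj // addn0.
Qed.

Lemma sum_at_index_le1 M j : perm_eq M L -> \sum_(a <- L) (index a M == j) <= 1.
Proof.
move=> pM; have uM : uniq M by rewrite (perm_uniq pM).
rewrite sum_bool_count -(permP pM) -[count _ M](count_map (index^~ M) (pred1 j)).
rewrite count_uniq_mem ?leq_b1 // map_inj_in_uniq // => a b aM; exact: index_inj.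
Qed.

Lemma sum_swapped_le2 i M : perm_eq M L ->
  \sum_(a <- L) \sum_(b <- L) swapped M i a b <= 2.
Proof.
move=> pM; set at_pos := fun j a => nat_of_bool (index a M == j).
apply: (@leq_trans (\sum_(a <- L) \sum_(b <- L)
   (at_pos i a * at_pos i.+1 b + at_pos i.+1 a * at_pos i b))).
  apply: leq_sum => a _; apply: leq_sum => b _; rewrite /swapped /at_pos.
  by do 4 case: eqP.
under eq_bigr do rewrite big_split /=.
rewrite big_split /= -!big_distrlr.
by rewrite -[2]/(1 * 1 + 1 * 1) leq_add // leq_mul // sum_at_index_le1.
Qed.

Lemma potential_swap i M Lo Le seen : perm_eq M L ->
  potential (swap_adj i M) Lo Le seen <= potential M Lo Le seen + 8.
Proof.
move=> pM; have uM : uniq M by rewrite (perm_uniq pM).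
apply: (@leq_trans (\sum_(a <- L) \sum_(b <- L)
   (pair_state M Lo Le seen a b + 4 * swapped M i a b))).
  by apply: leq_sum => a _; apply: leq_sum => b _; apply: pair_state_swap.
under eq_bigr do rewrite big_split /= -big_distrr.
rewrite big_split /= -big_distrr leq_add2l -[8]/(4 * 2) leq_mul2l /=.
exact: sum_swapped_le2.
Qed.

Lemma potential_swaps (sw : seq nat) M Lo Le seen : perm_eq M L ->
  potential (foldl (fun M i => swap_adj i M) M sw) Lo Le seen
  <= potential M Lo Le seen + 8 * size sw.
Proof.
elim: sw M => [|i sw IH] M pM /=; first by rewrite addn0.
apply: leq_trans (IH _ (perm_trans (perm_swap_adj _ _) pM)) _.
by rewrite mulnS addnA leq_add2r potential_swap.
Qed.

Lemma potential_agree M seen : potential M M M seen = 0.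
Proof.
by rewrite /potential big1 // => a _; rewrite big1 // => b _; rewrite /pair_state pair_potential_agree.
Qed.

Lemma mtf_amortized s A Lp Lo Le seen :
  perm_eq Lp L -> perm_eq Lo L -> perm_eq Le L -> all (mem L) s ->
  2 * (mtf_parity_cost false Lo seen s + mtf_parity_cost true Le seen s)
  <= 8 * offline_cost A Lp s + potential Lp Lo Le seen.
Proof.
elim: s A Lp Lo Le seen => [|x s IH] A Lp Lo Le seen pLp pLo pLe /=; first by rewrite muln0.
case/andP => xL sL; case: (head step0 A) => sw j.
set M := foldl _ Lp sw; set k := minn j (index x M).
have pM : perm_eq M L := perm_trans (perm_swaps _ _) pLp.
have [xM xo xe] : [/\ x \in M, x \in Lo & x \in Le].
  by rewrite (perm_mem pM) (perm_mem pLo) (perm_mem pLe).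
rewrite eqbF_neg eqb_id -/(parity seen x).
rewrite -/(mtf_if (~~ parity seen x) x Lo) -/(mtf_if (parity seen x) x Le).
have := IH (behead A) (move_to k x M) (mtf_if (~~ parity seen x) x Lo)
  (mtf_if (parity seen x) x Le) (x :: seen) (perm_trans (perm_move_to k xM) pM)
  (perm_trans (perm_mtf_if _ xo) pLo) (perm_trans (perm_mtf_if _ xe) pLe) sL.
have := potential_request seen pM pLo pLe xL (geq_minr j (index x M)).
have := potential_swaps sw Lo Le seen pLp.
rewrite -/M -/k /access_cost; lia.
Qed.

End Potential.

Theorem lemma10 (T : eqType) (L s : seq T) :
  uniq L -> all (fun x => x \in L) s ->
  MTFO L s + MTFE L s <= 4 * OPT L s.
Proof.
move=> uL sL; rewrite /OPT; case: ex_minnP => n.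
rewrite /has_offline_cost; case: excluded_middle_informative => // -[A optA] _ _.
have := mtf_amortized uL A [::] (perm_refl L) (perm_refl L) (perm_refl L) sL.
by rewrite optA potential_agree addn0 /MTFO /MTFE; lia.
Qed.
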